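(* Let $(\mathfrak{g},[\cdot,\cdot]_{\mathfrak{g}})$ be a Leibniz algebra over a field $\mathbf{K}$, $(V;\rho^L,\rho^R)$ a representation, and $T:V\to\mathfrak{g}$ a relative Rota-Baxter operator. If two formal deformations $\bar T_t=\sum_{i\ge0}\bar{\mathfrak{T}}_it^i$ and $T_t=\sum_{i\ge0}\mathfrak{T}_it^i$ of $T$ are equivalent, then their infinitesimals $\bar{\mathfrak{T}}_1$ and $\mathfrak{T}_1$ lie in $\mathcal{Z}^1(V,\mathfrak{g})$ and define the same class in $\mathcal{H}^1(V,\mathfrak{g})$.
   Context: A Leibniz algebra is a vector space $\mathfrak{g}$ with bilinear $[\cdot,\cdot]_{\mathfrak{g}}$ satisfying $[x,[y,z]_{\mathfrak{g}}]_{\mathfrak{g}}=[[x,y]_{\mathfrak{g}},z]_{\mathfrak{g}}+[y,[x,z]_{\mathfrak{g}}]_{\mathfrak{g}}$. A representation $(V;\rho^L,\rho^R)$: linear $\rho^L,\rho^R:\mathfrak{g}\to\mathfrak{gl}(V)$ with $\rho^L([x,y]_{\mathfrak{g}})=[\rho^L(x),\rho^L(y)]$, $\rho^R([x,y]_{\mathfrak{g}})=[\rho^L(x),\rho^R(y)]$, $\rho^R(y)\rho^L(x)=-\rho^R(y)\rho^R(x)$. $L_xy=[x,y]_{\mathfrak{g}}$. A relative Rota-Baxter operator is a linear $T:V\to\mathfrak{g}$ with $[Tv_1,Tv_2]_{\mathfrak{g}}=T(\rho^L(Tv_1)v_2+\rho^R(Tv_2)v_1)$. Cohomology of $T$: $C^n(V,\mathfrak{g})=\mathrm{Hom}(\otimes^nV,\mathfrak{g})$,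 $C^0=\mathfrak{g}$, with $\partial_T:C^n\to C^{n+1}$, $(\partial_Tf)(v_1,\dots,v_{n+1})=\sum_{i=1}^n(-1)^{i+1}[Tv_i,f(v_1,\dots,\hat v_i,\dots,v_{n+1})]_{\mathfrak{g}}-\sum_{i=1}^n(-1)^{i+1}T\rho^R(f(v_1,\dots,\hat v_i,\dots,v_{n+1}))v_i+(-1)^{n+1}[f(v_1,\dots,v_n),Tv_{n+1}]_{\mathfrak{g}}+(-1)^nT\rho^L(f(v_1,\dots,v_n))v_{n+1}+\sum_{1\le i<j\le n+1}(-1)^if(v_1,\dots,\hat v_i,\dots,v_{j-1},\rho^L(Tv_i)v_j+\rho^R(Tv_j)v_i,v_{j+1},\dots,v_{n+1})$ (for $x\in C^0$: $(\partial_Tx)(v)=T\rho^L(x)v-[x,Tv]_{\mathfrak{g}}$); $\mathcal{Z}^k=\ker\partial_T\cap C^k$, $\mathcal{B}^k=\partial_T(C^{k-1})$, $\mathcal{H}^k=\mathcal{Z}^k/\mathcal{B}^k$. $\mathfrak{g}[[t]]$, $V[[t]]$ denote formal power series; the bracket and $\rho^L,\rho^R$ extend $\mathbf{K}[[t]]$-bilinearly. A formal deformation of $T$ is $T_t=\sum_{i\ge0}\mathfrak{T}_it^i$ with $\mathfrak{T}_i\in\mathrm{Hom}(V,\mathfrak{g})$, $\mathfrak{T}_0=T$, extended $\mathbf{K}[[t]]$-linearly, such that $[T_t(u),T_t(v)]_{\mathfrak{g}}=T_t(\rho^L(T_t(u))v+\rho^R(T_t(v))u)$ for all $u,v\in V$.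 Its infinitesimal is $\mathfrak{T}_1$. Two formal deformations $\bar T_t$, $T_t$ of $T$ are equivalent if there exist $x\in\mathfrak{g}$, $\phi_i\in\mathfrak{gl}(\mathfrak{g})$, $\varphi_i\in\mathfrak{gl}(V)$ ($i\ge2$) such that $\phi_t=\mathrm{Id}_{\mathfrak{g}}+tL_x+\sum_{i\ge2}\phi_it^i$ and $\varphi_t=\mathrm{Id}_V+t\rho^L(x)+\sum_{i\ge2}\varphi_it^i$ satisfy: $[\phi_t(y),\phi_t(z)]_{\mathfrak{g}}=\phi_t[y,z]_{\mathfrak{g}}$ for $y,z\in\mathfrak{g}$; $\varphi_t\rho^L(y)u=\rho^L(\phi_t(y))\varphi_t(u)$ and $\varphi_t\rho^R(y)u=\rho^R(\phi_t(y))\varphi_t(u)$ for $y\in\mathfrak{g},u\in V$; and $T_t\circ\varphi_t=\phi_t\circ\bar T_t$ as $\mathbf{K}[[t]]$-module maps. *)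

From HB Require Import structures.
From mathcomp Require Import all_boot all_order all_algebra.
Set Implicit Arguments. Unset Strict Implicit. Unset Printing Implicit Defensive.
Import GRing.Theory.
Local Open Scope ring_scope.

Section Defs.
Variables (K : fieldType) (g V : lmodType K).

Definition is_lin (U W : lmodType K) (f : U -> W) : Prop :=
  forall (a : K) (u v : U), f (a *: u + v) = a *: f u + f v.

Definition leibniz_algebra (br : g -> g -> g) : Prop :=
  (forall x, is_lin (br x)) /\ (forall y, is_lin (fun x => br x y)) /\
  (forall x y z, br x (br y z) = br (br x y) z + br y (br x z)).

Definition leibniz_rep (br : g -> g -> g) (rhoL rhoR : g -> V -> V) : Prop :=
  (forall x, is_lin (rhoL x)) /\ (forall x, is_lin (rhoR x)) /\
  (forall (a : K) x y v, rhoL (a *: x + y) v = a *: rhoL x v + rhoL y v) /\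
  (forall (a : K) x y v, rhoR (a *: x + y) v = a *: rhoR x v + rhoR y v) /\
  (forall x y v, rhoL (br x y) v = rhoL x (rhoL y v) - rhoL y (rhoL x v)) /\
  (forall x y v, rhoR (br x y) v = rhoL x (rhoR y v) - rhoR y (rhoL x v)) /\
  (forall x y v, rhoR y (rhoL x v) = - rhoR y (rhoR x v)).

Definition rel_RB (br : g -> g -> g) (rhoL rhoR : g -> V -> V) (T : V -> g) : Prop :=
  is_lin T /\
  forall v1 v2, br (T v1) (T v2) = T (rhoL (T v1) v2 + rhoR (T v2) v1).

Definition del (i : nat) (s : seq V) : seq V := take i s ++ drop i.+1 s.

(* An n-cochain
   is represented as a function on lists of vectors, evaluated on lists of
   length n; indices are 0-based (paper's index i corresponds to i.+1 here). *)
Definition dT (br : g -> g -> g) (rhoL rhoR : g -> V -> V) (T : V -> g)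
    (n : nat) (f : seq V -> g) (s : seq V) : g :=
  \sum_(i < n) ((-1) ^+ i : K) *:
      (br (T (nth 0 s i)) (f (del i s)) - T (rhoR (f (del i s)) (nth 0 s i)))
  + ((-1) ^+ n.+1 : K) *: br (f (take n s)) (T (nth 0 s n))
  + ((-1) ^+ n : K) *: T (rhoL (f (take n s)) (nth 0 s n))
  + \sum_(j < n.+1) \sum_(i < j) ((-1) ^+ i.+1 : K) *:
      f (del i (set_nth 0 s j
          (rhoL (T (nth 0 s i)) (nth 0 s j) + rhoR (T (nth 0 s j)) (nth 0 s i)))).

Definition dT0 (br : g -> g -> g) (rhoL : g -> V -> V) (T : V -> g)
    (x : g) (v : V) : g :=
  T (rhoL x v) - br x (T v).

Definition cochain1 (f : V -> g) : seq V -> g := fun s => f (nth 0 s 0).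

Definition Z1 br rhoL rhoR T (f : V -> g) : Prop :=
  is_lin f /\ forall v1 v2, dT br rhoL rhoR T 1 (cochain1 f) [:: v1; v2] = 0.

Definition cohomologous1 br rhoL (T : V -> g) (f1 f2 : V -> g) : Prop :=
  exists x : g, forall v, f1 v - f2 v = dT0 br rhoL T x v.

(* Formal deformation T_t = sum_i Tt i t^i of T, stated coefficientwise
   (coefficient of t^n on both sides of the defining identity). *)
Definition formal_deformation br (rhoL rhoR : g -> V -> V) (T : V -> g)
    (Tt : nat -> V -> g) : Prop :=
  (forall i, is_lin (Tt i)) /\ Tt 0%N = T /\
  forall (n : nat) (u v : V),
    \sum_(i < n.+1) br (Tt i u) (Tt (n - i)%N v) =
    \sum_(i < n.+1) Tt i (rhoL (Tt (n - i)%N u) v + rhoR (Tt (n - i)%N v) u).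

(* Equivalence of formal deformations Tb (= \bar T_t) and Tt (= T_t),
   with phi_t = sum phi i t^i, varphi_t = sum vphi i t^i, all identities
   stated coefficientwise. *)
Definition equiv_deformations br (rhoL rhoR : g -> V -> V)
    (Tb Tt : nat -> V -> g) : Prop :=
  exists (x : g) (phi : nat -> g -> g) (vphi : nat -> V -> V),
    (forall i, is_lin (phi i)) /\ (forall i, is_lin (vphi i)) /\
    phi 0%N = id /\ phi 1%N = br x /\
    vphi 0%N = id /\ vphi 1%N = rhoL x /\
    (forall n y z, \sum_(i < n.+1) br (phi i y) (phi (n - i)%N z) = phi n (br y z)) /\
    (forall n y u, vphi n (rhoL y u) = \sum_(i < n.+1) rhoL (phi i y) (vphi (n - i)%N u)) /\
    (forall n y u, vphi n (rhoR y u) = \sum_(i < n.+1) rhoR (phi i y) (vphi (n - i)%N u)) /\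
    (forall n u, \sum_(i < n.+1) Tt i (vphi (n - i)%N u) =
                 \sum_(i < n.+1) phi i (Tb (n - i)%N u)).

End Defs.

From HB Require Import structures.
From mathcomp Require Import all_boot all_order all_algebra.
Local Open Scope ring_scope.
Import GRing.Theory.

(* Both conclusions are read off the coefficient of t in the defining
   identities.  For a deformation T_t, that coefficient of
   [T_t u, T_t v] = T_t (rhoL (T_t u) v + rhoR (T_t v) u) is precisely the
   1-cocycle condition for T_1.  For an equivalence, the coefficient of t in
   T_t o varphi_t = phi_t o bar T_t is T_1 + T rhoL(x) = bar T_1 + [x, T -],
   i.e. bar T_1 - T_1 = partial_T x.  Neither step uses the Leibniz identity,
   the representation axioms or the Rota-Baxter identity. *)

Lemma is_lin_add (K : fieldType) (U W : lmodType K) (f : U -> W) :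
  is_lin f -> forall u v, f (u + v) = f u + f v.
Proof. by move=> f_lin u v; rewrite -[u in LHS]scale1r f_lin scale1r. Qed.

Section FirstOrder.
Variables (K : fieldType) (g V : lmodType K).
Variables (br : g -> g -> g) (rhoL rhoR : g -> V -> V) (T : V -> g).

Lemma dT1_cochain1E (f : V -> g) (v1 v2 : V) :
  dT br rhoL rhoR T 1 (cochain1 f) [:: v1; v2] =
    br (T v1) (f v2) - T (rhoR (f v2) v1) + br (f v1) (T v2)
    - T (rhoL (f v1) v2) - f (rhoL (T v1) v2 + rhoR (T v2) v1).
Proof.
rewrite /dT /cochain1 !big_ord_recr !big_ord0 /= /del /=.
by rewrite expr0 !expr1 sqrrN expr1n !scale1r !scaleN1r !add0r.
Qed.

Lemma formal_deformation_coef1 (Tt : nat -> V -> g) (u v : V) :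
  formal_deformation br rhoL rhoR T Tt ->
  br (T u) (Tt 1%N v) + br (Tt 1%N u) (T v) =
    T (rhoL (Tt 1%N u) v) + T (rhoR (Tt 1%N v) u)
    + Tt 1%N (rhoL (T u) v + rhoR (T v) u).
Proof.
move=> [Tt_lin [Tt0 Tt_eq]]; have := Tt_eq 1%N u v.
rewrite !big_ord_recr !big_ord0 /= !add0r !subn0 subnn Tt0 => ->.
by rewrite is_lin_add // -Tt0.
Qed.

Lemma formal_deformation_Z1 (Tt : nat -> V -> g) :
  formal_deformation br rhoL rhoR T Tt -> Z1 br rhoL rhoR T (Tt 1%N).
Proof.
move=> Tt_def; split; first by case: Tt_def.
move=> v1 v2; rewrite dT1_cochain1E (addrAC (br _ _)).
rewrite formal_deformation_coef1 // (addrAC _ (Tt 1%N _)) addrK.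
by rewrite (addrAC _ (Tt 1%N _)) addrK subrr.
Qed.

Lemma equiv_deformations_cohomologous1 (Tb Tt : nat -> V -> g) :
  Tb 0%N = T -> Tt 0%N = T -> equiv_deformations br rhoL rhoR Tb Tt ->
  cohomologous1 br rhoL T (Tb 1%N) (Tt 1%N).
Proof.
move=> Tb0 Tt0 [x [phi [vphi [_ [_ [phi0 [phi1 [vphi0 [vphi1 [_ [_ [_ comm]]]]]]]]]]]].
exists x => v; have := comm 1%N v.
rewrite !big_ord_recr !big_ord0 /= !add0r !subn0 subnn.
rewrite phi0 phi1 vphi0 vphi1 Tb0 Tt0 /dT0 /= => coef1.
by apply: (addIr (br x (T v))); rewrite subrK addrAC -coef1 addrK.
Qed.

End FirstOrder.

Theorem theorem3p18 (K : fieldType) (g V : lmodType K)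
    (br : g -> g -> g) (rhoL rhoR : g -> V -> V) (T : V -> g)
    (Tb Tt : nat -> V -> g) :
  leibniz_algebra br ->
  leibniz_rep br rhoL rhoR ->
  rel_RB br rhoL rhoR T ->
  formal_deformation br rhoL rhoR T Tb ->
  formal_deformation br rhoL rhoR T Tt ->
  equiv_deformations br rhoL rhoR Tb Tt ->
  Z1 br rhoL rhoR T (Tb 1%N) /\ Z1 br rhoL rhoR T (Tt 1%N) /\
  cohomologous1 br rhoL T (Tb 1%N) (Tt 1%N).
Proof.
move=> _ _ _ Tb_def Tt_def Tb_Tt.
split; first exact: formal_deformation_Z1.
split; first exact: formal_deformation_Z1.
apply: equiv_deformations_cohomologous1 Tb_Tt.
- by case: Tb_def => _ [].
- by case: Tt_def => _ [].
Qed.
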